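(* Let $v\in A$ be a monic irreducible polynomial of degree $d$, and let $\lambda$ (an element of the algebraic closure of $\mathbb{F}_q$ in $\mathbb{C}_\infty$) be a root of $v$, viewed as a polynomial in $\theta$ over $\mathbb{F}_q$. Then \[(-1)^d v=\prod_{i=1}^d \omega(\lambda^{q^i})^{q-1}.\]
   Context: $A=\mathbb{F}_q[\theta]$; $\mathbb{C}_\infty$ the completion of an algebraic closure of the completion of $\mathbb{F}_q(\theta)$ for $|\theta|=q$. Fix $\iota\in\mathbb{C}_\infty$ with $\iota^{q-1}=-\theta$; $\omega(t)=\iota\prod_{j\ge0}(1-t/\theta^{q^j})^{-1}$, a power series in $t$ converging for $|t|\le1$ (so it can be evaluated at $\lambda$, which satisfies $|\lambda|=1$). *)

From HB Require Import structures.
From mathcomp Require Import all_boot all_order all_algebra all_field.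
Set Implicit Arguments. Unset Strict Implicit. Unset Printing Implicit Defensive.
Import Order.TTheory GRing.Theory Num.Theory.
Local Open Scope ring_scope.

Definition converges (C : fieldType) (R : realFieldType) (abs : C -> R)
  (u : nat -> C) (l : C) : Prop :=
  forall eps : R, 0 < eps -> exists N : nat, forall n : nat, (N <= n)%N ->
    abs (u n - l) < eps.

Definition cauchy (C : fieldType) (R : realFieldType) (abs : C -> R)
  (u : nat -> C) : Prop :=
  forall eps : R, 0 < eps -> exists N : nat, forall m n : nat,
    (N <= m)%N -> (N <= n)%N -> abs (u m - u n) < eps.

Definition complete (C : fieldType) (R : realFieldType) (abs : C -> R) : Prop :=
  forall u : nat -> C, cauchy abs u -> exists l : C, converges abs u l.

(* Partial products of omega(t) = iota * prod_{j>=0} (1 - t/theta^{q^j})^{-1}. *)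
Definition omega_partial (C : fieldType) (io theta : C) (q : nat) (t : C)
  (N : nat) : C :=
  io * \prod_(j < N) (1 - t / theta ^+ (q ^ j))^-1.

Definition is_omega_value (C : fieldType) (R : realFieldType) (abs : C -> R)
  (io theta : C) (q : nat) (t w : C) : Prop :=
  converges abs (omega_partial io theta q t) w.

From HB Require Import structures.
From mathcomp Require Import all_boot all_order all_algebra all_field.
From mathcomp Require Import ring.
Import Order.TTheory GRing.Theory Num.Theory.
Local Open Scope ring_scope.
Set Implicit Arguments.
Unset Strict Implicit.

(* The proof has three ingredients.
   1. Galois theory of finite fields: the q-power Frobenius (a ring morphism of
      C, since q is a power of the characteristic) permutes the roots of v and
      fixes exactly the image of F; the Frobenius orbit of lam therefore cuts
      out a factor of v defined over F, which by irreducibility is v itself.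
      Hence v = prod_(i<d) (X - lam^(q^i)) and lam^(q^d) = lam.
   2. The functional equation omega(t)^q = (t^q - theta) omega(t^q), proved on
      the partial products and passed to the limit using only that abs is an
      ultrametric absolute value (completeness is not needed, the values of
      omega being given as limits); on the closed unit disc omega is nonzero.
   3. A cyclic-product argument: for W_i = w_((i mod d)+1) the equation
      reads W_i^q = (lam^(q^(i+2)) - theta) W_(i+1), and multiplying over one
      period gives (prod W)^(q-1) = prod_i (lam^(q^i) - theta) = (-1)^d v(theta). *)

Lemma big_periodic_shift (R : Type) (idx : R) (op : Monoid.com_law idx)
    (g : nat -> R) (d k : nat) :
  (forall i, g (i + d)%N = g i) ->
  \big[op/idx]_(i < d) g (k + i)%N = \big[op/idx]_(i < d) g i.
Proof.
move=> gper; elim: k => [|k IH]; first by apply: eq_bigr => i _; rewrite add0n.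
rewrite -{}IH; case: d gper => [|d] gper; first by rewrite !big_ord0.
rewrite big_ord_recr big_ord_recl /= Monoid.mulmC addSnnS gper addn0.
by congr (op _ _); apply: eq_bigr => i _; rewrite /bump leq0n add1n addSnnS.
Qed.

Lemma periodic_modn (T : Type) (g : nat -> T) (d : nat) :
  (forall i, g (i + d)%N = g i) -> forall i, g i = g (i %% d)%N.
Proof.
move=> gper i; rewrite {1}(divn_eq i d) addnC.
by elim: (i %/ d)%N => [|k IH]; rewrite ?mul0n ?addn0 // mulSn addnCA addnC gper.
Qed.

Lemma expr_qpow_periodic (R : pzSemiRingType) (x : R) (q d : nat) :
  x ^+ (q ^ d) = x -> forall i, x ^+ (q ^ (i + d)) = x ^+ (q ^ i).
Proof. by move=> xd i; rewrite expnD mulnC exprM xd. Qed.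

Lemma horner_prod_XsubC_sign (K : comNzRingType) (a : nat -> K) (d : nat) (x : K) :
  (-1) ^+ d * (\prod_(i < d) ('X - (a i)%:P)).[x] = \prod_(i < d) (a i - x).
Proof.
rewrite horner_prod -[X in (-1) ^+ X](card_ord d) -prodrN.
by apply: eq_bigr => i _; rewrite hornerXsubC opprB.
Qed.

Lemma prod_cyclic_recurrence (K : fieldType) (W c : nat -> K) (d q : nat) :
  (0 < q)%N -> (forall i, W (i + d)%N = W i) -> (forall i, W i != 0) ->
  (forall i, W i ^+ q = c i * W i.+1) ->
  (\prod_(i < d) W i) ^+ q.-1 = \prod_(i < d) c i.
Proof.
move=> q0 Wper W0 Wrec; have P0 : \prod_(i < d) W i != 0 by apply/prodf_neq0.
apply: (mulIf P0); rewrite -exprSr prednK // -prodrXl.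
under eq_bigr => i _ do rewrite Wrec.
by rewrite big_split /= (big_periodic_shift _ 1 Wper).
Qed.

Section QFrobenius.
Variables (C : fieldType) (q : nat).
Hypothesis qchar : [pchar C].-nat q.

Definition qfrob of [pchar C].-nat q := fun x : C => x ^+ q.

Lemma qfrob_is_nmod_morphism : nmod_morphism (qfrob qchar).
Proof.
split; last by move=> x y; rewrite /qfrob exprDn_pchar.
by rewrite /qfrob expr0n; case: q qchar.
Qed.

Lemma qfrob_is_monoid_morphism : monoid_morphism (qfrob qchar).
Proof. by split=> [|x y]; rewrite /qfrob ?expr1n ?exprMn. Qed.

HB.instance Definition _ :=
  GRing.isNmodMorphism.Build C C (qfrob qchar) qfrob_is_nmod_morphism.
HB.instance Definition _ :=
  GRing.isMonoidMorphism.Build C C (qfrob qchar) qfrob_is_monoid_morphism.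

Lemma qfrobE x : qfrob qchar x = x ^+ q. Proof. by []. Qed.

Lemma expr_qpow_inj i : injective (fun x : C => x ^+ (q ^ i)).
Proof.
elim: i => [|i IH] x y /=; first by rewrite !expn0 !expr1.
rewrite expnS !exprM => /IH /eqP; rewrite -subr_eq0 -(rmorphB (qfrob qchar)).
by rewrite /qfrob expf_eq0 subr_eq0 => /andP[_ /eqP].
Qed.

End QFrobenius.

Lemma card_pchar_nat (F : finFieldType) (C : fieldType) (phi : {rmorphism F -> C}) :
  [pchar C].-nat #|F|.
Proof.
have [p _ pcharF] := finPcharP F.
rewrite (eq_pnat _ (pcharf_eq (rmorph_pchar phi pcharF))).
by rewrite (card_pprimeChar pcharF) pnatX pnat_id // (pcharf_prime pcharF).
Qed.

Section FrobeniusOrbit.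
Variables (F : finFieldType) (C : fieldType) (phi : {rmorphism F -> C}).
Local Notation q := #|F|.
Local Notation Fr := (qfrob (card_pchar_nat phi)).

(* The q-Frobenius fixes the image of F, hence every polynomial over F. *)
Lemma qfrob_map_poly (v : {poly F}) : map_poly Fr (map_poly phi v) = map_poly phi v.
Proof.
rewrite -map_poly_comp; apply: eq_map_poly => c /=.
by rewrite qfrobE -rmorphXn expf_card.
Qed.

(* Conversely, an element fixed by the q-Frobenius lies in the image of F:
   it is a root of X^q - X = prod_(x : F) (X - x). *)
Lemma qfrob_fixed_image (c : C) : c ^+ q = c -> exists x, phi x = c.
Proof.
move=> cq; have : root (map_poly phi ('X^q - 'X)) c.
  by rewrite rmorphB /= map_polyXn map_polyX rootE !hornerE cq subrr.
rewrite finField_genPoly map_prod_XsubC.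
rewrite -(big_map phi xpredT (fun a => 'X - a%:P)) root_prod_XsubC.
by case/mapP => x _ ->; exists x.
Qed.

Lemma qfrob_fixed_poly (h : {poly C}) :
  map_poly Fr h = h -> exists h0, map_poly phi h0 = h.
Proof.
move=> hfix; pose h0 := \poly_(i < size h) odflt 0 [pick x | phi x == h`_i].
exists h0; apply/polyP => i; rewrite coef_map coef_poly.
case: ltnP => hi; last by rewrite nth_default //; apply: rmorph0.
have [x hx] : exists x, phi x = h`_i.
  by apply: qfrob_fixed_image; rewrite -[RHS](congr1 (coefp i) hfix) /= coef_map.
by case: pickP => [y /eqP //|/(_ x)]; rewrite hx eqxx.
Qed.

Lemma root_qpow (v : {poly F}) (lam : C) i :
  root (map_poly phi v) lam -> root (map_poly phi v) (lam ^+ (q ^ i)).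
Proof.
move=> rl; elim: i => [|i IH]; first by rewrite expn0 expr1.
rewrite expnSr exprM -(qfrobE (card_pchar_nat phi)); apply/rootP.
by rewrite -(qfrob_map_poly v) horner_map (rootP IH) rmorph0.
Qed.

Lemma qpow_eq_return (x : C) (i j : nat) :
  (i <= j)%N -> x ^+ (q ^ i) = x ^+ (q ^ j) -> x ^+ (q ^ (j - i)) = x.
Proof.
move=> ij eij; apply: (expr_qpow_inj (card_pchar_nat phi) (i := i)).
by rewrite /= -exprM -expnD subnK.
Qed.

(* Pigeonhole: a root of a polynomial of degree d returns to itself after at
   most d Frobenius steps. *)
Lemma qpow_orbit_returns (v : {poly F}) (d : nat) (lam : C) :
  size v = d.+1 -> root (map_poly phi v) lam ->
  exists2 k, (0 < k <= d)%N & lam ^+ (q ^ k) = lam.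
Proof.
move=> sv rl; pose rs := [seq lam ^+ (q ^ i) | i <- iota 0 d.+1].
have V0 : map_poly phi v != 0 by rewrite map_poly_eq0 -size_poly_eq0 sv.
have : ~~ uniq rs.
  apply/negP => urs; have hall : all (root (map_poly phi v)) rs.
    by apply/allP => x /mapP [i _ ->]; apply: root_qpow.
  by have := max_poly_roots V0 hall urs; rewrite size_map size_iota size_map_poly sv ltnn.
case/(uniqPn 0) => i [j [ij]]; rewrite size_map size_iota => jd.
rewrite !(nth_map 0%N) ?size_iota ?(ltn_trans ij) //.
rewrite !nth_iota ?(ltn_trans ij) // !add0n => eij.
exists (j - i)%N; first by rewrite subn_gt0 ij (leq_trans (leq_subr _ _)).
exact: qpow_eq_return (ltnW ij) eij.
Qed.

Definition qpow_orbit (x : C) (m : nat) := [seq x ^+ (q ^ i) | i <- iota 0 m].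

Lemma qpow_orbit_uniq (x : C) (m : nat) :
  (forall k, (0 < k < m)%N -> x ^+ (q ^ k) != x) -> uniq (qpow_orbit x m).
Proof.
move=> noret; rewrite map_inj_in_uniq ?iota_uniq // => i j.
rewrite !mem_iota !add0n => /andP[_ im] /andP[_ jm] fij.
have ret k l : (k < l < m)%N -> x ^+ (q ^ k) = x ^+ (q ^ l) -> False.
  case/andP=> kl lm ekl; have := noret (l - k)%N.
  rewrite subn_gt0 kl (leq_ltn_trans (leq_subr _ _) lm).
  by rewrite (qpow_eq_return (ltnW kl) ekl) eqxx => /(_ isT).
by case: (ltngtP i j) => // [ij|ji]; [case: (ret i j) | case: (ret j i)]; rewrite ?ij ?ji.
Qed.

Lemma qpow_orbit_rot (x : C) (m : nat) :
  (0 < m)%N -> x ^+ (q ^ m) = x -> map Fr (qpow_orbit x m) = rot 1 (qpow_orbit x m).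
Proof.
case: m => // m _ xm; rewrite /qpow_orbit -map_comp.
have -> : map (Fr \o fun i => x ^+ (q ^ i)) (iota 0 m.+1)
          = map (fun i => x ^+ (q ^ i)) (iota 1 m.+1).
  rewrite (iotaDl 1 0) -map_comp; apply: eq_map => i /=.
  by rewrite qfrobE -exprM -expnSr.
by rewrite -{1}(addn1 m) iotaD map_cat /= add1n xm expn0 expr1 rot1_cons cats1.
Qed.

Lemma qpow_orbit_poly_fixed (x : C) (m : nat) :
  (0 < m)%N -> x ^+ (q ^ m) = x ->
  map_poly Fr (\prod_(z <- qpow_orbit x m) ('X - z%:P))
    = \prod_(z <- qpow_orbit x m) ('X - z%:P).
Proof.
move=> m0 xm; rewrite map_prod_XsubC -(big_map Fr xpredT (fun z => 'X - z%:P)).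
by rewrite qpow_orbit_rot //; apply: perm_big; rewrite perm_rot.
Qed.

Lemma irreducible_conjugates (v : {poly F}) (d : nat) (lam : C) :
  v \is monic -> irreducible_poly v -> size v = d.+1 -> root (map_poly phi v) lam ->
  lam ^+ (q ^ d) = lam /\ map_poly phi v = \prod_(i < d) ('X - (lam ^+ (q ^ i))%:P).
Proof.
move=> mv iv sv rl; have [k k0d fk] := qpow_orbit_returns sv rl.
have exm : exists m, (0 < m)%N && (lam ^+ (q ^ m) == lam).
  by exists k; rewrite fk eqxx andbT; case/andP: k0d.
case: (ex_minnP exm) => m /andP[m0 /eqP fm] mmin.
have [h0 hh0] := qfrob_fixed_poly (qpow_orbit_poly_fixed m0 fm).
have h0v : h0 %| v.
  rewrite -(dvdp_map phi) hh0 uniq_roots_dvdp ?uniq_rootsE //.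
    by apply/allP => z /mapP [i _ ->]; apply: root_qpow.
  apply: qpow_orbit_uniq => j /andP[j0 jm]; apply/eqP => fj.
  by have := mmin j; rewrite j0 fj eqxx leqNgt jm => /(_ isT).
have sh0 : size h0 = m.+1.
  by rewrite -(size_map_poly phi) hh0 size_prod_XsubC size_map size_iota.
have mh0 : h0 \is monic by rewrite -(map_monic phi) hh0 monic_prod_XsubC.
have eh0 : h0 = v.
  by apply/eqP; rewrite -eqp_monic // (iv.2 h0) // sh0 eqSS -lt0n.
have md : m = d by apply/eqP; rewrite -eqSS -sh0 eh0 sv.
split; first by rewrite -md.
by rewrite -eh0 hh0 big_map -md -{1}(subn0 m) -/(index_iota 0 m) big_mkord.
Qed.

End FrobeniusOrbit.

Definition ultrametric_abs (C : fieldType) (R : realFieldType) (abs : C -> R) :=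
  [/\ forall x, abs x = 0 <-> x = 0, forall x, 0 <= abs x,
      forall x y, abs (x * y) = abs x * abs y &
      forall x y, abs (x + y) <= Num.max (abs x) (abs y)].

Section UltrametricAbs.
Variables (C : fieldType) (R : realFieldType) (abs : C -> R).
Hypothesis habs : ultrametric_abs abs.

Lemma abs_eq0 x : (abs x == 0) = (x == 0).
Proof. by case: habs => H0 _ _ _; apply/eqP/eqP => /H0. Qed.

Lemma abs0 : abs 0 = 0. Proof. by apply/eqP; rewrite abs_eq0. Qed.

Lemma abs_ge0 x : 0 <= abs x. Proof. by case: habs. Qed.

Lemma absM x y : abs (x * y) = abs x * abs y. Proof. by case: habs. Qed.

Lemma abs_gt0 x : x != 0 -> 0 < abs x.
Proof. by move=> x0; rewrite lt_def abs_eq0 x0 abs_ge0. Qed.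

Lemma abs1 : abs 1 = 1.
Proof.
apply: (mulfI (_ : abs 1 != 0)); first by rewrite abs_eq0 oner_eq0.
by rewrite -absM !mulr1.
Qed.

Lemma absN x : abs (- x) = abs x.
Proof.
have absN1 : abs (-1) = 1.
  have : abs (-1) ^+ 2 = 1 ^+ 2 by rewrite expr2 -absM mulrNN mulr1 abs1 expr1n.
  by move/eqP; rewrite eqrXn2 ?abs_ge0 // => /eqP.
by rewrite -mulN1r absM absN1 mul1r.
Qed.

Lemma absX x n : abs (x ^+ n) = abs x ^+ n.
Proof. by elim: n => [|n IH]; rewrite ?abs1 // !exprS absM IH. Qed.

Lemma absV x : abs x^-1 = (abs x)^-1.
Proof.
have [->|x0] := eqVneq x 0; first by rewrite invr0 abs0 invr0.
apply: (mulfI (_ : abs x != 0)); first by rewrite abs_eq0.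
by rewrite -absM !mulfV ?abs1 ?abs_eq0.
Qed.

Lemma abs_ultra_le x y e : abs x <= e -> abs y <= e -> abs (x + y) <= e.
Proof.
by case: habs => _ _ _ HU hx hy; apply: le_trans (HU x y) _; rewrite ge_max hx hy.
Qed.

Lemma abs_ultra_lt x y e : abs x < e -> abs y < e -> abs (x + y) < e.
Proof.
by case: habs => _ _ _ HU hx hy; apply: le_lt_trans (HU x y) _; rewrite gt_max hx hy.
Qed.

(* The ultrametric "isosceles" principle in the case needed here. *)
Lemma abs_1subr y : abs y < 1 -> abs (1 - y) = 1.
Proof.
move=> y1; apply/eqP; rewrite eq_le abs_ultra_le ?abs1 ?absN ?(ltW y1) //=.
rewrite leNgt; apply/negP => lt1.
by have := abs_ultra_lt lt1 y1; rewrite (subrK y 1) abs1 ltxx.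
Qed.

Lemma abs_expr_le1_of_fixed x n m : (1 < n)%N -> x ^+ n = x -> abs (x ^+ m) <= 1.
Proof.
move=> n1 xn; rewrite absX exprn_ile1 ?abs_ge0 // leNgt; apply/negP => x1.
by have := ltr_eXnr n x1; rewrite n1 -absX xn ltxx.
Qed.

Lemma converges_unique u a b : converges abs u a -> converges abs u b -> a = b.
Proof.
move=> ua ub; apply/eqP; rewrite -subr_eq0; apply: contraT => ab.
have [N1 h1] := ua _ (abs_gt0 ab); have [N2 h2] := ub _ (abs_gt0 ab).
pose n := maxn N1 N2; have := h1 n (leq_maxl _ _); have := h2 n (leq_maxr _ _).
rewrite -(absN (u n - a)) => hb ha.
by have := abs_ultra_lt hb ha; rewrite opprB addrC addrA subrK ltxx.
Qed.

Lemma converges_cst c : converges abs (fun=> c) c.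
Proof. by move=> eps eps0; exists 0%N => n _; rewrite subrr abs0. Qed.

Lemma converges_mul u v a b : converges abs u a -> converges abs v b ->
  converges abs (fun n => u n * v n) (a * b).
Proof.
move=> ua vb eps eps0; pose B := Num.max (abs b) 1; pose A := abs a + 1.
have B0 : 0 < B by rewrite lt_max ltr01 orbT.
have A0 : 0 < A by rewrite ltr_wpDl ?abs_ge0.
have [N0 h0] := vb 1 ltr01.
have [N1 h1] := ua (eps / B) (divr_gt0 eps0 B0).
have [N2 h2] := vb (eps / A) (divr_gt0 eps0 A0).
exists (maxn N0 (maxn N1 N2)) => n; rewrite !geq_max => /and3P[n0 n1 n2].
have vnB : abs (v n) <= B.
  rewrite -(subrK b (v n)) abs_ultra_le ?le_max ?lexx //.
  by rewrite (ltW (h0 n n0)) orbT.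
have -> : u n * v n - a * b = (u n - a) * v n + a * (v n - b) by ring.
apply: abs_ultra_lt; rewrite absM.
  apply: le_lt_trans (ler_wpM2l (abs_ge0 _) vnB) _.
  by rewrite -ltr_pdivlMr // h1.
apply: le_lt_trans (ler_wpM2r (abs_ge0 _) (_ : abs a <= A)) _.
  by rewrite lerDl ler01.
by rewrite mulrC -ltr_pdivlMr // h2.
Qed.

Lemma converges_exp u a k : converges abs u a ->
  converges abs (fun n => u n ^+ k) (a ^+ k).
Proof.
move=> ua; elim: k => [|k IH]; first exact: converges_cst.
by move=> eps /(converges_mul ua IH) [N hN]; exists N => n /hN; rewrite !exprS.
Qed.

Lemma converges_shift u a : converges abs u a -> converges abs (fun n => u n.+1) a.
Proof. by move=> ua eps eps0; have [N hN] := ua eps eps0; exists N => n /leqW /hN. Qed.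

Lemma converges_neq0 u a c : 0 < c -> (forall n, abs (u n) = c) ->
  converges abs u a -> a != 0.
Proof.
move=> c0 uc ua; apply/eqP => a0; have [N hN] := ua c c0.
by have := hN N (leqnn N); rewrite a0 subr0 uc ltxx.
Qed.

End UltrametricAbs.

Section OmegaPartial.
Variables (C : fieldType) (q : nat) (io theta : C).
Hypothesis qchar : [pchar C].-nat q.
Hypothesis io_q : io ^+ q.-1 = - theta.
Hypothesis theta0 : theta != 0.

(* The functional equation omega(t)^q = (t^q - theta) omega(t^q) at the level of
   partial products: raising to the q-th power shifts each factor
   (1 - t/theta^(q^j))^-1 to (1 - t^q/theta^(q^(j+1)))^-1, and io^q = -theta io
   supplies the missing factor (1 - t^q/theta)^-1. *)
Lemma omega_partial_qfrob x N : x ^+ q != theta ->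
  omega_partial io theta q x N ^+ q
    = (x ^+ q - theta) * omega_partial io theta q (x ^+ q) N.+1.
Proof.
move=> xq_theta; have q0 : (0 < q)%N by case/andP: qchar.
have io_q' : io ^+ q = io * - theta by rewrite -[in LHS](prednK q0) exprS io_q.
have factor_q j : ((1 - x / theta ^+ (q ^ j)) ^-1) ^+ q
                  = (1 - x ^+ q / theta ^+ (q ^ j.+1)) ^-1.
  rewrite exprVn -!(qfrobE qchar) rmorphB rmorph1 rmorphM fmorphV /=.
  by rewrite !qfrobE -exprM expnSr.
rewrite /omega_partial (big_ord_recl N) /= expn0 expr1 exprMn -prodrXl.
under eq_bigr => j _ do rewrite factor_q.
have xq_theta' : 1 - x ^+ q / theta != 0.
  rewrite subr_eq0; apply: contra xq_theta => /eqP e.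
  by rewrite (divr1_eq (esym e)).
rewrite io_q'; set P := \prod_(i < N) _; field.
by rewrite theta0 subr_eq0 eq_sym xq_theta.
Qed.

Lemma io_neq0 : (1 < q)%N -> io != 0.
Proof.
move=> q1; apply: contra_neq theta0 => io0.
by apply/eqP; rewrite -oppr_eq0 -io_q io0 expr0n -subn1 subn_eq0 leqNgt q1.
Qed.

End OmegaPartial.

Section OmegaValue.
Variables (C : fieldType) (R : realFieldType) (abs : C -> R).
Hypothesis habs : ultrametric_abs abs.
Variables (q : nat) (io theta : C).
Hypothesis qchar : [pchar C].-nat q.
Hypothesis io_q : io ^+ q.-1 = - theta.
Hypothesis abs_theta : 1 < abs theta.

(* On the closed unit disc every factor of omega is a unit for abs. *)
Lemma abs_omega_partial x N : abs x <= 1 -> abs (omega_partial io theta q x N) = abs io.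
Proof.
move=> x1; have q0 : (0 < q)%N by case/andP: qchar.
rewrite /omega_partial absM // -[RHS]mulr1; congr (_ * _).
elim: N => [|N IH]; first by rewrite big_ord0 abs1.
rewrite big_ord_recr /= absM // IH mul1r absV // abs_1subr ?invr1 //.
have theta_pow : 1 < abs theta ^+ (q ^ N).
  apply: lt_le_trans abs_theta _; apply: ler_eXnr (ltW abs_theta).
  by rewrite expn_gt0 q0.
rewrite absM // absV // absX //; apply: le_lt_trans (ler_wpM2r _ x1) _.
  by rewrite invr_ge0 ltW // (lt_trans ltr01).
by rewrite mul1r invf_lt1 // (lt_trans ltr01).
Qed.

Lemma omega_value_qfrob x w w' : abs x <= 1 ->
  is_omega_value abs io theta q x w -> is_omega_value abs io theta q (x ^+ q) w' ->
  w ^+ q = (x ^+ q - theta) * w'.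
Proof.
move=> x1 xw xw'; have theta0 : theta != 0.
  by apply: contraTneq abs_theta => ->; rewrite abs0 // ltr10.
have xq_theta : x ^+ q != theta.
  apply: contraTneq abs_theta => <-.
  by rewrite absX // -leNgt exprn_ile1 ?abs_ge0.
apply: (converges_unique habs (converges_exp habs q xw)).
move=> eps /(converges_mul habs (converges_cst habs (x ^+ q - theta))
                             (converges_shift xw')) [N hN].
by exists N => n /hN; rewrite omega_partial_qfrob.
Qed.

Lemma omega_value_neq0 x w : io != 0 -> abs x <= 1 ->
  is_omega_value abs io theta q x w -> w != 0.
Proof.
move=> io0 x1 xw; apply: (converges_neq0 (abs_gt0 habs io0) _ xw) => N.
exact: abs_omega_partial.
Qed.

(* Along a Frobenius orbit of period d, the product of the omega values,
   raised to the power q - 1, is the product of the (orbit point - theta):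
   the functional equation makes the omega values a cyclic recurrence. *)
Lemma prod_omega_orbit (x : C) (d : nat) (W : nat -> C) :
  (1 < q)%N -> (0 < d)%N -> x ^+ (q ^ d) = x -> (forall i, W (i + d)%N = W i) ->
  (forall i, is_omega_value abs io theta q (x ^+ (q ^ i.+1)) (W i)) ->
  (\prod_(i < d) W i) ^+ q.-1 = \prod_(i < d) (x ^+ (q ^ i) - theta).
Proof.
move=> q1 d0 xd W_per W_omega; pose f i := x ^+ (q ^ i).
have abs_f i : abs (f i) <= 1.
  apply: (abs_expr_le1_of_fixed habs _ _ xd).
  by rewrite -[X in (X < _)%N](expn0 q) ltn_exp2l.
have theta0 : theta != 0.
  by apply: contraTneq abs_theta => ->; rewrite abs0 // ltr10.
have W_rec i : W i ^+ q = (f i.+2 - theta) * W i.+1.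
  have := omega_value_qfrob (abs_f i.+1) (W_omega i).
  by rewrite /f -exprM -expnSr; apply; apply: W_omega.
have W_neq0 i : W i != 0.
  exact: (omega_value_neq0 (io_neq0 io_q theta0 q1) (abs_f i.+1) (W_omega i)).
have g_per i : f (i + d)%N - theta = f i - theta by rewrite /f expr_qpow_periodic.
rewrite (prod_cyclic_recurrence (ltnW q1) W_per W_neq0 W_rec).
by rewrite (big_periodic_shift _ 2 g_per).
Qed.

End OmegaValue.

Unset Implicit Arguments.

Theorem lemma3p6
  (F : finFieldType) (C : closedFieldType) (R : realFieldType)
  (iotaF : {rmorphism F -> C})
  (abs : C -> R)
  (Habs0 : forall x : C, abs x = 0 <-> x = 0)
  (Habs_ge0 : forall x : C, 0 <= abs x)
  (HabsM : forall x y : C, abs (x * y) = abs x * abs y)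
  (Habs_ultra : forall x y : C, abs (x + y) <= Num.max (abs x) (abs y))
  (Hcomplete : complete abs)
  (theta : C) (Htheta : abs theta = (#|F|)%:R)
  (io : C) (Hio : io ^+ (#|F|).-1 = - theta)
  (v : {poly F}) (d : nat)
  (Hmonic : v \is monic) (Hirr : irreducible_poly v) (Hdeg : size v = d.+1)
  (lam : C) (Hroot : root (map_poly iotaF v) lam)
  (w : nat -> C)
  (Hw : forall i : nat, (1 <= i <= d)%N ->
          is_omega_value abs io theta #|F| (lam ^+ (#|F| ^ i)) (w i)) :
  (-1) ^+ d * (map_poly iotaF v).[theta]
    = \prod_(1 <= i < d.+1) (w i) ^+ (#|F|).-1.
Proof.
have habs : ultrametric_abs abs by split.
have q1 := card_finNzRing_gt1 F.
have d0 : (0 < d)%N by have := Hirr.1; rewrite Hdeg ltnS.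
have [lam_per ->] := irreducible_conjugates Hmonic Hirr Hdeg Hroot.
pose W i := w (i %% d).+1.
have W_per i : W (i + d)%N = W i by rewrite /W modnDr.
have W_omega i : is_omega_value abs io theta #|F| (lam ^+ (#|F| ^ i.+1)) (W i).
  have lam_mod := periodic_modn (expr_qpow_periodic lam_per).
  have -> : lam ^+ (#|F| ^ i.+1) = lam ^+ (#|F| ^ (i %% d).+1).
    by rewrite !(lam_mod (_.+1)) -(addn1 i) -(addn1 (i %% d)) modnDml.
  by apply: Hw; rewrite ltn_pmod.
rewrite (horner_prod_XsubC_sign (fun i => lam ^+ (#|F| ^ i))) big_add1 big_mkord.
under [RHS]eq_bigr => i _ do rewrite -(modn_small (ltn_ord i)) -/(W i).
have abs_theta : 1 < abs theta by rewrite Htheta ltr1n.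
by rewrite prodrXl (prod_omega_orbit habs (card_pchar_nat iotaF) Hio abs_theta q1 d0
                     lam_per W_per W_omega).
Qed.
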